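(* Let $\ell_1,\ell_2,\dots\in\mathbb R^A$ be arbitrary non-negative loss vectors, and let $\pi_1,\pi_2,\dots$ be the FTRL iterates defined in the context. Suppose $0<\alpha_1\le1$, $\eta_1=\eta_2(1-\alpha_1)$, and for all $k\ge2$, $0<\alpha_k<1$ and $0<\eta_{k+1}(1-\alpha_k)\le\eta_k$. Define $\widehat\eta_1=\eta_2$ and $\widehat\eta_k=\eta_k/(1-\alpha_k)$ for $k>1$. Then for every $n\ge1$, $$R_n\le\frac53\sum_{k=1}^n\alpha_k^n\widehat\eta_k\alpha_k\mathsf{Var}_{\pi_k}(\ell_k)+\frac{\log A}{\eta_{n+1}}+3\sum_{k=1}^n\alpha_k^n\widehat\eta_k^2\alpha_k^2\|\ell_k\|_\infty^3\,\mathbb 1\Big(\widehat\eta_k\alpha_k\|\ell_k\|_\infty>\tfrac13\Big).$$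
   Context: Online weighted linear optimization over $\mathcal A=\{1,\dots,A\}$: given $\{\alpha_k\}\subset(0,1]$, let $\alpha_i^k=\alpha_i\prod_{j=i+1}^k(1-\alpha_j)$ for $i<k$, $\alpha_k^k=\alpha_k$. Define $L_0=0$ and $L_k=(1-\alpha_k)L_{k-1}+\alpha_k\ell_k=\sum_{i=1}^k\alpha_i^k\ell_i$. FTRL with negative-entropy regularizer and learning rates $\eta_k>0$: $\pi_k(a)=\exp(-\eta_kL_{k-1}(a))/\sum_{a'}\exp(-\eta_kL_{k-1}(a'))$ for $k\ge1$ (equivalently $\pi_{k}=\arg\min_{\pi\in\Delta(\mathcal A)}\{\langle\pi,L_{k-1}\rangle+\eta_k^{-1}\sum_a\pi(a)\log\pi(a)\}$; $\pi_1$ is uniform). Regret: $R_n=\max_{a\in\mathcal A}\big\{\sum_{k=1}^n\alpha_k^n\langle\pi_k,\ell_k\rangle-\sum_{k=1}^n\alpha_k^n\ell_k(a)\big\}$. For $\pi\in\Delta(\mathcal A)$, $\mathbb E_\pi[\ell]=\sum_a\pi(a)\ell(a)$ and $\mathsf{Var}_\pi(\ell)=\sum_a\pi(a)(\ell(a)-\mathbb E_\pi[\ell])^2$. *)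

From HB Require Import structures.
From mathcomp Require Import all_boot all_order all_algebra.
From mathcomp Require Import all_classical all_reals all_analysis.
Set Implicit Arguments. Unset Strict Implicit. Unset Printing Implicit Defensive.
Import Order.TTheory GRing.Theory Num.Theory.
Local Open Scope ring_scope.

Section FTRL.
Variable R : realType.
Variable A : nat.
Variable alpha : nat -> R.           (* alpha k, k >= 1 (index 0 unused) *)
Variable eta : nat -> R.
Variable loss : nat -> 'I_A -> R.

(* alpha_i^k = alpha_i * prod_{j=i+1}^k (1 - alpha_j) *)
Definition wgt (i k : nat) : R := alpha i * \prod_(i.+1 <= j < k.+1) (1 - alpha j).

Fixpoint cumL (k : nat) (a : 'I_A) : R :=
  match k with
  | 0 => 0
  | k'.+1 => (1 - alpha k'.+1) * cumL k' a + alpha k'.+1 * loss k'.+1 a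
  end.

Definition ftrl (k : nat) (a : 'I_A) : R :=
  expR (- eta k * cumL k.-1 a) / \sum_(b < A) expR (- eta k * cumL k.-1 b).

Definition expectpi (p l : 'I_A -> R) : R := \sum_(a < A) p a * l a.
Definition varpi (p l : 'I_A -> R) : R :=
  \sum_(a < A) p a * (l a - expectpi p l) ^+ 2.
Definition supnorm (l : 'I_A -> R) : R := \big[Num.max/0]_(a < A) `|l a|.

Definition regret_vs (n : nat) (a : 'I_A) : R :=
  \sum_(1 <= k < n.+1) wgt k n * expectpi (ftrl k) (loss k)
  - \sum_(1 <= k < n.+1) wgt k n * loss k a.

(* R_n = max_a regret_vs n a; hA : 0 < A provides a seed element *)
Definition regret (hA : (0 < A)%N) (n : nat) : R :=
  \big[Num.max/regret_vs n (Ordinal hA)]_(a < A) regret_vs n a.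

Definition etahat (k : nat) : R :=
  if k == 1%N then eta 2 else eta k / (1 - alpha k).

Definition ind01 (b : bool) : R := if b then 1 else 0.

End FTRL.

From HB Require Import structures.
From mathcomp Require Import all_boot all_order all_algebra.
From mathcomp Require Import all_classical all_reals all_analysis.
From mathcomp Require Import ring lra.
Set Implicit Arguments.
Unset Strict Implicit.
Unset Printing Implicit Defensive.
Import Order.TTheory GRing.Theory Num.Theory.
Local Open Scope ring_scope.

(* Let [Psi k] be (1/eta_(k+1)) log ((1/A) sum_a
   exp (- eta_(k+1) L_k a)).  One round of FTRL satisfies
     alpha_k <pi_k, l_k> + Psi k <= (1 - alpha_k) Psi (k-1) + alpha_k h_k,
   where h_k is the k-th summand of the bound: raising the learning rate from
   eta_(k+1) to etahat_k can only increase the potential (monotonicity of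
   power means); since etahat_k (1 - alpha_k) = eta_k, the potential at
   etahat_k splits into (1 - alpha_k) Psi (k-1) plus (1/etahat_k) times the
   log moment generating function of - etahat_k alpha_k l_k under pi_k, which
   is bounded by 5/3 of the variance when the range is at most 1/3 and by the
   squared range otherwise.  Unrolling with the weights alpha_k^n and using
   Psi n >= - L_n a - log A / eta_(n+1) for every action a gives the bound. *)

Section ExpInequalities.
Variable R : realType.
Implicit Types p t x y : R.

Lemma expRM_le_convex p x : 0 <= p -> p <= 1 ->
  expR (p * x) <= p * expR x + (1 - p).
Proof.
move=> p_ge0 p_le1; have := convex_expR (Itv01 p_ge0 p_le1) x 0.
by rewrite !convRE /= expR0 !mulr0 addr0 mulr1.
Qed.

Lemma ln_le_subr1 t : 0 < t -> ln t <= t - 1.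
Proof. by move=> t_gt0; have := @le_ln1Dx R (t - 1); rewrite subrKC; apply; lra. Qed.

Lemma expRN_le_quad y : 0 <= y -> expR (- y) <= 1 - y + y ^+ 2.
Proof.
move=> y_ge0.
have half_sq : (1 + y / 2) ^+ 2 <= expR y.
  rewrite -[y in expR y](@divfK _ 2) ?pnatr_eq0 // mulrC expRM_natr.
  by rewrite lerXn2r ?nnegrE ?expR_ge1Dx ?expR_ge0 //; lra.
have quad_gt0 : 0 < 1 - y + y ^+ 2 by nra.
rewrite expRN -[_^-1]mul1r ler_pdivrMr ?expR_gt0 //.
have := ler_wpM2l (ltW quad_gt0) half_sq; nra.
Qed.

(* For [y < 0], put [u := - y] and invert [1 - u <= expR (- u)]: on [0, 1/3]
   one has [(1 + u + 5/3 u^2) (1 - u) >= 1]. *)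
Lemma expRN_le_quad_small y : - (1/3) <= y -> expR (- y) <= 1 - y + 5/3 * y ^+ 2.
Proof.
move=> y_ge; have [y_ge0|y_lt0] := lerP 0 y.
  by have := expRN_le_quad y_ge0; nra.
have inv : expR (- y) * expR y = 1 by rewrite expRN mulVf ?gt_eqF ?expR_gt0.
have bound : expR (- y) * (1 + y) <= 1.
  by rewrite -[in leRHS]inv ler_wpM2l ?expR_ge0 ?expR_ge1Dx.
have : 0 < expR (- y) := expR_gt0 _.
nra.
Qed.

End ExpInequalities.

Section Distributions.
Variables (R : realType) (A : nat).
Implicit Types (p l x : 'I_A -> R) (c M : R).

Lemma supnorm_ge l b : 0 <= l b -> l b <= supnorm l.
Proof.
move=> l_ge0; apply: le_trans (le_bigmax _ (fun a => `|l a|) b).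
by rewrite ger0_norm.
Qed.

Lemma expectpiZ p c l : expectpi p (fun b => c * l b) = c * expectpi p l.
Proof. by rewrite /expectpi mulr_sumr; apply: eq_bigr => b _; ring. Qed.

Lemma varpiZ p c l : varpi p (fun b => c * l b) = c ^+ 2 * varpi p l.
Proof.
by rewrite /varpi expectpiZ [RHS]mulr_sumr; apply: eq_bigr => b _; ring.
Qed.

Section LogMomentGenerating.
Variable p : 'I_A -> R.
Hypothesis p_ge0 : forall b, 0 <= p b.
Hypothesis p_sum1 : \sum_(b < A) p b = 1.

Lemma varpi_ge0 l : 0 <= varpi p l.
Proof. by apply: sumr_ge0 => b _; rewrite mulr_ge0 ?sqr_ge0. Qed.

Lemma expectpi_le x M : (forall b, x b <= M) -> expectpi p x <= M.
Proof.
move=> x_le; rewrite -[M]mul1r -p_sum1 mulr_suml.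
by apply: ler_sum => b _; rewrite ler_wpM2l.
Qed.

Lemma mgfN_gt0 x : 0 < \sum_(b < A) p b * expR (- x b).
Proof.
rewrite lt_neqAle sumr_ge0 ?andbT => [|b _]; last by rewrite mulr_ge0 ?expR_ge0.
apply/eqP => /esym/psumr_eq0P S0; move/eqP: p_sum1; apply/negP.
rewrite big1 => [|b _]; first by rewrite eq_sym oner_eq0.
have /eqP := S0 (fun b _ => mulr_ge0 (p_ge0 b) (expR_ge0 _)) b isT.
by rewrite mulf_eq0 => /orP[/eqP //|]; rewrite gt_eqF ?expR_gt0.
Qed.

Lemma expectpi_ln_mgfN_le_var x : (forall b, 0 <= x b <= 1/3) ->
  expectpi p x + ln (\sum_(b < A) p b * expR (- x b)) <= 5/3 * varpi p x.
Proof.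
move=> x_range; set m := expectpi p x.
have m_le : m <= 1/3 by apply: expectpi_le => b; case/andP: (x_range b).
have centred : \sum_(b < A) p b * expR (- (x b - m))
               = expR m * \sum_(b < A) p b * expR (- x b).
  rewrite mulr_sumr; apply: eq_bigr => b _.
  by rewrite mulrCA -expRD; congr (_ * expR _); ring.
have mean0 : \sum_(b < A) p b * (x b - m) = 0.
  under eq_bigr do rewrite mulrBr.
  by rewrite sumrB -mulr_suml p_sum1 mul1r subrr.
have taylor : \sum_(b < A) p b * expR (- (x b - m))
    <= \sum_(b < A) (p b + (- 1) * (p b * (x b - m)) + 5/3 * (p b * (x b - m) ^+ 2)).
  apply: ler_sum => b _; have [xb_ge0 _] := andP (x_range b).
  have -> : p b + (- 1) * (p b * (x b - m)) + 5/3 * (p b * (x b - m) ^+ 2)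
           = p b * (1 - (x b - m) + 5/3 * (x b - m) ^+ 2) by ring.
  by rewrite ler_wpM2l ?expRN_le_quad_small //; lra.
rewrite !big_split /= -!mulr_sumr p_sum1 mean0 centred in taylor.
have mS_gt0 := mulr_gt0 (expR_gt0 m) (mgfN_gt0 x).
rewrite -[m in m + _]expRK -lnM ?posrE ?expR_gt0 ?mgfN_gt0 //.
have := ln_le_subr1 mS_gt0; rewrite /varpi -/m; lra.
Qed.

Lemma expectpi_ln_mgfN_le_sq x M : (forall b, 0 <= x b <= M) ->
  expectpi p x + ln (\sum_(b < A) p b * expR (- x b)) <= M ^+ 2.
Proof.
move=> x_range.
have := ln_le_subr1 (mgfN_gt0 x).
suff : expectpi p x + \sum_(b < A) p b * expR (- x b) - 1 <= M ^+ 2 by lra.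
have -> : expectpi p x + \sum_(b < A) p b * expR (- x b) - 1
          = \sum_(b < A) p b * (x b + expR (- x b) - 1).
  rewrite /expectpi -[1 in LHS]p_sum1 -big_split -sumrB /=.
  by apply: eq_bigr => b _; ring.
rewrite -[M ^+ 2]mul1r -[in leRHS]p_sum1 mulr_suml; apply: ler_sum => b _.
have /andP[xb_ge0 xb_le] := x_range b; rewrite ler_wpM2l //.
have := expRN_le_quad xb_ge0; have := lerXn2r 2 xb_ge0 (le_trans xb_ge0 xb_le) xb_le; lra.
Qed.

Lemma expectpi_ln_mgfN_le x M : (forall b, 0 <= x b <= M) ->
  expectpi p x + ln (\sum_(b < A) p b * expR (- x b))
    <= 5/3 * varpi p x + 3 * M ^+ 3 * ind01 R (M > 1/3).
Proof.
move=> x_range; rewrite /ind01; have [M_gt|M_le] := ltrP (1/3) M.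
  have := expectpi_ln_mgfN_le_sq x_range; have := varpi_ge0 x; nra.
rewrite mulr0 addr0; apply: expectpi_ln_mgfN_le_var => b.
by have /andP[-> /le_trans->] := x_range b.
Qed.

End LogMomentGenerating.
End Distributions.

Section Potential.
Variables (R : realType) (A : nat).
Hypothesis A_gt0 : (0 < A)%N.
Implicit Types (c x : 'I_A -> R) (e : R).

Definition potential e c : R :=
  ln ((\sum_(b < A) expR (- e * c b)) / A%:R) / e.

Definition gibbs e c (a : 'I_A) : R :=
  expR (- e * c a) / \sum_(b < A) expR (- e * c b).

Lemma sum_expR_gt0 (f : 'I_A -> R) : 0 < \sum_(b < A) expR (f b).
Proof.
rewrite (bigD1 (Ordinal A_gt0)) //= ltr_pwDl ?expR_gt0 //.
by rewrite sumr_ge0 // => b _; rewrite expR_ge0.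
Qed.

Lemma gibbs_ge0 e c a : 0 <= gibbs e c a.
Proof. by rewrite divr_ge0 ?expR_ge0 // ltW ?sum_expR_gt0. Qed.

Lemma gibbs_sum1 e c : \sum_(a < A) gibbs e c a = 1.
Proof. by rewrite -mulr_suml divff // gt_eqF ?sum_expR_gt0. Qed.

Lemma ln_mean_expR0 (f : 'I_A -> R) : (forall b, f b = 0) ->
  ln ((\sum_(b < A) expR (f b)) / A%:R) = 0.
Proof.
move=> f0; rewrite (eq_bigr (fun _ => 1)) => [|b _]; last by rewrite f0 expR0.
by rewrite sumr_const card_ord divff ?ln1 // pnatr_eq0 -lt0n.
Qed.

Lemma potential0 e : potential e (fun _ => 0) = 0.
Proof. by rewrite /potential ln_mean_expR0 ?mul0r // => b; rewrite mulr0. Qed.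

Lemma potential_ge e c a : 0 < e -> - c a <= potential e c + ln A%:R / e.
Proof.
move=> e_gt0; set Z := \sum_(b < A) expR (- e * c b).
have A_pos : 0 < A%:R :> R by rewrite ltr0n.
have Z_ge : expR (- e * c a) <= Z.
  by rewrite /Z (bigD1 a) //= lerDl sumr_ge0 // => b _; rewrite expR_ge0.
have : ln (expR (- e * c a) / A%:R) <= ln (Z / A%:R).
  by rewrite ler_ln ?posrE ?divr_gt0 ?expR_gt0 ?sum_expR_gt0 // ler_pM2r ?invr_gt0.
have e_inv : 0 < e^-1 by rewrite invr_gt0.
rewrite ln_div ?posrE ?expR_gt0 // expRK -(ler_pM2r e_inv) -/(potential e c).
by rewrite mulrBl mulrAC mulNr divff ?gt_eqF // mulN1r lerBlDr.
Qed.

(* Jensen for the concave power [t |-> t ^ (mu / lam)]: write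
   [expR (- mu c) = expR (q s) * expR (q (- lam c - s))] with [q = mu / lam]
   and [s] the log-mean at [lam], and use convexity of [expR] on the
   second factor. *)
Lemma potential_le mu lam c : 0 < mu -> mu <= lam ->
  potential mu c <= potential lam c.
Proof.
move=> mu_gt0 mu_le; have lam_gt0 := lt_le_trans mu_gt0 mu_le.
have A_pos : 0 < A%:R :> R by rewrite ltr0n.
set s := ln ((\sum_(b < A) expR (- lam * c b)) / A%:R).
have exp_s : expR s = (\sum_(b < A) expR (- lam * c b)) / A%:R.
  by rewrite lnK // posrE divr_gt0 ?sum_expR_gt0.
set q := mu / lam.
have q_ge0 : 0 <= q by rewrite divr_ge0 ?ltW.
have q_le1 : q <= 1 by rewrite ler_pdivrMr // mul1r.
have jensen : \sum_(b < A) expR (- mu * c b)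
    <= \sum_(b < A) expR (q * s) * (q * expR (- lam * c b - s) + (1 - q)).
  apply: ler_sum => b _.
  have -> : - mu * c b = q * s + q * (- lam * c b - s).
    by rewrite /q; field; rewrite gt_eqF.
  by rewrite expRD ler_wpM2l ?expR_ge0 ?expRM_le_convex.
have average : \sum_(b < A) expR (q * s) * (q * expR (- lam * c b - s) + (1 - q))
    = expR (q * s) * A%:R.
  rewrite -mulr_sumr big_split /= -mulr_sumr sumr_const card_ord.
  under eq_bigr do rewrite expRB.
  rewrite -mulr_suml exp_s -mulr_natr; congr (_ * _); field.
  by rewrite !gt_eqF ?sum_expR_gt0.
rewrite average -ler_pdivrMr // -ler_ln ?posrE ?divr_gt0 ?sum_expR_gt0 ?expR_gt0 // expRK in jensen.
rewrite /potential -/s ler_pdivrMr // (le_trans jensen) // /q; lra.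
Qed.

(* Also for [t = 0], where both sides vanish (using [x / 0 = 0]); this covers
   the first round, in which [eta 1] may be [0]. *)
Lemma potential_rescale e t c : e != 0 ->
  ln ((\sum_(b < A) expR (- (e * t) * c b)) / A%:R) / e = t * potential (e * t) c.
Proof.
move=> e_neq0; have [->|t_neq0] := eqVneq t 0.
  by rewrite mulr0 mul0r ln_mean_expR0 ?mul0r // => b; rewrite oppr0 mul0r.
by rewrite /potential; field; rewrite e_neq0 t_neq0.
Qed.

Lemma ln_mean_expR_gibbs e c x :
  ln ((\sum_(b < A) expR (- e * c b - x b)) / A%:R)
  = ln ((\sum_(b < A) expR (- e * c b)) / A%:R)
    + ln (\sum_(b < A) gibbs e c b * expR (- x b)).
Proof.
have A_pos : 0 < A%:R :> R by rewrite ltr0n.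
rewrite -lnM ?posrE ?divr_gt0 ?sum_expR_gt0 ?(mgfN_gt0 (gibbs_ge0 e c) (gibbs_sum1 e c)) //.
rewrite mulrAC mulr_sumr; congr (ln (_ / _)); apply: eq_bigr => b _.
by rewrite expRD mulrCA mulrA /gibbs divfK // gt_eqF ?sum_expR_gt0.
Qed.

End Potential.

Section WeightedSums.
Variables (R : realType) (alpha : nat -> R).

Definition wsum (g : nat -> R) (n : nat) : R :=
  \sum_(1 <= k < n.+1) wgt alpha k n * g k.

Lemma wsum0 g : wsum g 0 = 0.
Proof. by rewrite /wsum big_geq. Qed.

Lemma wsumS g n : wsum g n.+1 = (1 - alpha n.+1) * wsum g n + alpha n.+1 * g n.+1.
Proof.
rewrite /wsum big_nat_recr //= mulr_sumr; congr (_ + _).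
  by apply: eq_big_nat => k /andP[_ k_le]; rewrite /wgt big_nat_recr //=; ring.
by rewrite /wgt big_geq // mulr1.
Qed.

Lemma cumL_wsum (A : nat) (loss : nat -> 'I_A -> R) n a :
  cumL alpha loss n a = wsum (fun k => loss k a) n.
Proof. by elim: n => [|n IH]; rewrite ?wsum0 // wsumS /= IH. Qed.

End WeightedSums.

Section Regret.
Variables (R : realType) (A : nat) (alpha eta : nat -> R) (loss : nat -> 'I_A -> R).
Hypothesis A_gt0 : (0 < A)%N.
Hypothesis loss_ge0 : forall k a, 0 <= loss k a.
Hypothesis alpha1_gt0 : 0 < alpha 1%N.
Hypothesis alpha1_le1 : alpha 1%N <= 1.
Hypothesis eta1 : eta 1%N = eta 2 * (1 - alpha 1%N).
Hypothesis alpha_gt0_lt1 : forall k, (2 <= k)%N -> 0 < alpha k /\ alpha k < 1.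
Hypothesis eta_step : forall k, (2 <= k)%N ->
  0 < eta k.+1 * (1 - alpha k) /\ eta k.+1 * (1 - alpha k) <= eta k.

Local Notation etahat := (etahat alpha eta).
Local Notation pi := (ftrl alpha eta loss).
Local Notation L := (cumL alpha loss).

Let Psi k := potential (eta k.+1) (L k).

Let round_bound k := 5/3 * (etahat k * alpha k * varpi (pi k) (loss k))
  + 3 * (etahat k ^+ 2 * alpha k ^+ 2 * supnorm (loss k) ^+ 3
         * ind01 R (etahat k * alpha k * supnorm (loss k) > 1/3)).

Lemma alpha_ge0_le1 k : (0 < k)%N -> 0 <= alpha k <= 1.
Proof.
case: k => [//|[|k] _]; first by rewrite ltW.
by have [/ltW -> /ltW ->] := alpha_gt0_lt1 (isT : (2 <= k.+2)%N).
Qed.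

Lemma eta_gt0 k : (1 < k)%N -> 0 < eta k.
Proof. by move=> k_ge2; have [pos le] := eta_step k_ge2; exact: lt_le_trans pos le. Qed.

Lemma etahat_gt0 k : (0 < k)%N -> 0 < etahat k.
Proof.
case: k => [//|[|k] _]; first exact: eta_gt0.
have [_ alpha_lt1] := alpha_gt0_lt1 (isT : (2 <= k.+2)%N).
by rewrite /etahat /= divr_gt0 ?eta_gt0 // subr_gt0.
Qed.

Lemma etahatM k : (0 < k)%N -> etahat k * (1 - alpha k) = eta k.
Proof.
case: k => [//|[|k] _]; first by rewrite /etahat /= eta1.
have [_ alpha_lt1] := alpha_gt0_lt1 (isT : (2 <= k.+2)%N).
by rewrite /etahat /= divfK // gt_eqF ?subr_gt0.
Qed.

Lemma eta_le_etahat k : (0 < k)%N -> eta k.+1 <= etahat k.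
Proof.
case: k => [//|[|k] _]; first by rewrite /etahat.
have [_ alpha_lt1] := alpha_gt0_lt1 (isT : (2 <= k.+2)%N).
by have [_ le] := eta_step (isT : (2 <= k.+2)%N); rewrite /etahat /= ler_pdivlMr ?subr_gt0.
Qed.

Lemma regret_step j :
  alpha j.+1 * expectpi (pi j.+1) (loss j.+1) + Psi j.+1
    <= (1 - alpha j.+1) * Psi j + alpha j.+1 * round_bound j.+1.
Proof.
have k_gt0 : (0 < j.+1)%N by [].
set k := j.+1 in k_gt0 *; set e := etahat k; set a := alpha k.
set x := fun b => e * a * loss k b.
set S := \sum_(b < A) pi k b * expR (- x b).
have pi_gibbs : pi k = gibbs (eta k) (L j) by [].
have e_gt0 : 0 < e := etahat_gt0 k_gt0.
have /andP[a_ge0 _] := alpha_ge0_le1 k_gt0.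
have eta_k : eta k = e * (1 - a) by rewrite etahatM.
have L_k b : - e * L k b = - eta k * L j b - x b.
  by rewrite (_ : L k b = (1 - a) * L j b + a * loss k b) // eta_k /x; ring.
have potential_split : potential e (L k) = (1 - a) * Psi j + ln S / e.
  rewrite /potential (eq_bigr _ (fun b _ => congr1 expR (L_k b))) ln_mean_expR_gibbs //.
  by rewrite mulrDl {1}eta_k potential_rescale ?gt_eqF // -eta_k.
have mgf : expectpi (pi k) x + ln S <= e * (a * round_bound k).
  have x_range b : 0 <= x b <= e * a * supnorm (loss k).
    have ea_ge0 : 0 <= e * a := mulr_ge0 (ltW e_gt0) a_ge0.
    by rewrite /x /= mulr_ge0 //= ler_wpM2l ?supnorm_ge.
  rewrite [leRHS](_ : _ = 5/3 * varpi (pi k) x + 3 * (e * a * supnorm (loss k)) ^+ 3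
                            * ind01 R (e * a * supnorm (loss k) > 1/3) :> R).
    rewrite /S pi_gibbs.
    by apply: le_trans (expectpi_ln_mgfN_le (gibbs_ge0 A_gt0 _ _) (gibbs_sum1 A_gt0 _ _) x_range) _.
  by rewrite /x varpiZ /round_bound -/e -/a; ring.
have lnS_le : ln S / e <= a * round_bound k - a * expectpi (pi k) (loss k).
  by rewrite ler_pdivrMr //; move: mgf; rewrite /x expectpiZ; lra.
have := potential_le A_gt0 (L k) (eta_gt0 (isT : (1 < k.+1)%N)) (eta_le_etahat k_gt0).
rewrite -/e potential_split -/(Psi k); lra.
Qed.

Lemma wsum_expectpi_le n :
  wsum alpha (fun k => expectpi (pi k) (loss k)) n + Psi n <= wsum alpha round_bound n.
Proof.
elim: n => [|n IH].
  by rewrite !wsum0 (_ : Psi 0 = 0) ?addr0 //; exact: potential0.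
have one_sub_alpha_ge0 : 0 <= 1 - alpha n.+1.
  by rewrite subr_ge0; case/andP: (alpha_ge0_le1 (ltn0Sn n)).
have := ler_wpM2l one_sub_alpha_ge0 IH.
have := regret_step n; rewrite !wsumS; lra.
Qed.

Lemma regret_vs_le n a : (0 < n)%N ->
  regret_vs alpha eta loss n a <=
    5 / 3 * \sum_(1 <= k < n.+1) wgt alpha k n * etahat k * alpha k * varpi (pi k) (loss k)
    + ln (A%:R) / eta n.+1
    + 3 * \sum_(1 <= k < n.+1) wgt alpha k n * etahat k ^+ 2 * alpha k ^+ 2
            * supnorm (loss k) ^+ 3 * ind01 R (etahat k * alpha k * supnorm (loss k) > 1 / 3).
Proof.
case: n => [//|j] _.
have -> : regret_vs alpha eta loss j.+1 a
          = wsum alpha (fun k => expectpi (pi k) (loss k)) j.+1 - L j.+1 a.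
  by rewrite /regret_vs cumL_wsum.
have round_bound_sum : wsum alpha round_bound j.+1
    = 5 / 3 * \sum_(1 <= k < j.+2) wgt alpha k j.+1 * etahat k * alpha k * varpi (pi k) (loss k)
      + 3 * \sum_(1 <= k < j.+2) wgt alpha k j.+1 * etahat k ^+ 2 * alpha k ^+ 2
            * supnorm (loss k) ^+ 3 * ind01 R (etahat k * alpha k * supnorm (loss k) > 1 / 3).
  by rewrite /wsum !mulr_sumr -big_split /=; apply: eq_bigr => k _; rewrite /round_bound; ring.
have := wsum_expectpi_le j.+1.
have := potential_ge A_gt0 (L j.+1) a (eta_gt0 (isT : (1 < j.+2)%N)).
rewrite round_bound_sum -/(Psi j.+1); lra.
Qed.

End Regret.

Theorem theorem2 (R : realType) (A : nat) (hA : (0 < A)%N)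
  (alpha eta : nat -> R) (loss : nat -> 'I_A -> R) :
  (forall k a, 0 <= loss k a) ->
  0 < alpha 1%N -> alpha 1%N <= 1 ->
  eta 1%N = eta 2 * (1 - alpha 1%N) ->
  (forall k, (2 <= k)%N -> 0 < alpha k /\ alpha k < 1) ->
  (forall k, (2 <= k)%N -> 0 < eta k.+1 * (1 - alpha k) /\ eta k.+1 * (1 - alpha k) <= eta k) ->
  forall n : nat, (1 <= n)%N ->
  regret alpha eta loss hA n <=
    5 / 3 * \sum_(1 <= k < n.+1) wgt alpha k n * etahat alpha eta k * alpha k
                                  * varpi (ftrl alpha eta loss k) (loss k)
    + ln (A%:R) / eta n.+1
    + 3 * \sum_(1 <= k < n.+1) wgt alpha k n * (etahat alpha eta k) ^+ 2 * (alpha k) ^+ 2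
            * (supnorm (loss k)) ^+ 3
            * ind01 R (etahat alpha eta k * alpha k * supnorm (loss k) > 1 / 3).
Proof.
move=> loss_ge0 alpha1_gt0 alpha1_le1 eta1 alpha_gt0_lt1 eta_step n n_gt0.
by rewrite /regret; apply: bigmax_le => [|a _]; apply: regret_vs_le.
Qed.
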